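(* Let $\varphi : X\to X$ be a morphism in $\mathscr{C}$ with kernel $\kappa : K\to X$ and cokernel $\lambda : X\to L$. The following are equivalent: (1) $\varphi$ is both core invertible and dual core invertible; (2) $\varphi$ is both Moore–Penrose invertible and group invertible; (3) $\varphi$ is regular and $\kappa\lambda : K\to L$, $\kappa\kappa^{*} : K\to K$ and $\lambda^{*}\lambda : L\to L$ are all invertible. In this case, for every $\psi : X\to X$ with $\varphi\psi\varphi=\varphi$, $$\varphi^{\dagger}=[1_X-\lambda(\lambda^{*}\lambda)^{-1}\lambda^{*}]\psi[1_X-\kappa^{*}(\kappa\kappa^{*})^{-1}\kappa],$$ $$\varphi^{\#}=[1_X-\lambda(\kappa\lambda)^{-1}\kappa]\psi[1_X-\lambda(\kappa\lambda)^{-1}\kappa],$$ $$\varphi^{\mathrm{core}}=[1_X-\lambda(\kappa\lambda)^{-1}\kappa]\psi[1_X-\kappa^{*}(\kappa\kappa^{*})^{-1}\kappa],$$ $$\varphi_{\mathrm{core}}=[1_X-\lambda(\lambda^{*}\lambda)^{-1}\lambda^{*}]\psi[1_X-\lambda(\kappa\lambda)^{-1}\kappa].$$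
   Context: $\mathscr{C}$ is an additive category with an involution $*$: a map on morphisms sending $\varphi : X\to Y$ to $\varphi^* : Y \to X$ such that $(\varphi^* )^*=\varphi$, $(\varphi\psi)^*=\psi^*\varphi^*$ and $(\varphi+\phi)^*=\varphi^*+\phi^*$. Composition is written left to right: for $\varphi : X\to Y$ and $\psi : Y\to Z$, $\varphi\psi : X \to Z$ means ''first $\varphi$, then $\psi$''. A kernel of $\varphi : X\to Y$ is a morphism $\kappa : K\to X$ with $\kappa\varphi=0$ such that every $\alpha : M\to X$ with $\alpha\varphi=0$ factors uniquely as $\alpha=\alpha'\kappa$. A cokernel of $\varphi$ is a morphism $\lambda : Y\to L$ with $\varphi\lambda=0$ such that every $\beta : Y\to M$ with $\varphi\beta=0$ factors uniquely as $\beta=\lambda\beta'$. $\varphi$ is regular if there is $\chi$ with $\varphi\chi\varphi=\varphi$. A morphism is invertible if it has a two-sided inverse. For $\varphi : X\to X$ the following are defined. - The Moore–Penrose inverse $\varphi^\dagger$ is the unique $\chi$ with $\varphi\chi\varphi=\varphi$, $\chi\varphi\chi=\chi$, $(\varphi\chi)^*=\varphi\chi$ and $(\chi\varphi)^*=\chi\varphi$. - The group inverse $\varphi^{\#}$ is the unique $\chi$ with $\varphi\chi\varphi=\varphi$, $\chi\varphi\chi=\chi$ and $\varphi\chi=\chi\varphi$. - The core inverse $\varphi^{\mathrm{core}}$ is the unique $\chi$ with $(\varphi\chi)^*=\varphi\chi$, $\varphi\chi^2=\chi$ and $\chi\varphi^2=\varphi$. - The dual core inverse $\varphi_{\mathrm{core}}$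 is the unique $\chi$ with $(\chi\varphi)^*=\chi\varphi$, $\chi^2\varphi=\chi$ and $\varphi^2\chi=\varphi$. *)

From HB Require Import structures.
From mathcomp Require Import all_boot all_algebra.
Set Implicit Arguments. Unset Strict Implicit. Unset Printing Implicit Defensive.
Import GRing.Theory.
Local Open Scope ring_scope.

(* An additive category with involution.  Composition is written left to
   right: comp f g = "first f, then g". *)
Record invAddCat := InvAddCat {
  Ob : Type;
  Mor : Ob -> Ob -> zmodType;
  comp : forall X Y Z : Ob, Mor X Y -> Mor Y Z -> Mor X Z;
  idm : forall X : Ob, Mor X X;
  star : forall X Y : Ob, Mor X Y -> Mor Y X;
  compA : forall (X Y Z W : Ob) (f : Mor X Y) (g : Mor Y Z) (h : Mor Z W),
      comp (comp f g) h = comp f (comp g h);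
  comp1m : forall (X Y : Ob) (f : Mor X Y), comp (idm X) f = f;
  compm1 : forall (X Y : Ob) (f : Mor X Y), comp f (idm Y) = f;
  compDl : forall (X Y Z : Ob) (f g : Mor X Y) (h : Mor Y Z),
      comp (f + g) h = comp f h + comp g h;
  compDr : forall (X Y Z : Ob) (f : Mor X Y) (g h : Mor Y Z),
      comp f (g + h) = comp f g + comp f h;
  zero_ob : Ob;
  zero_ob_init : forall (X : Ob) (f : Mor zero_ob X), f = 0;
  zero_ob_term : forall (X : Ob) (f : Mor X zero_ob), f = 0;
  biprod : forall X Y : Ob, exists P : Ob, exists (i1 : Mor X P) (i2 : Mor Y P)
      (p1 : Mor P X) (p2 : Mor P Y),
      [/\ comp i1 p1 = idm X, comp i2 p2 = idm Y, comp i1 p2 = 0,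
          comp i2 p1 = 0 & comp p1 i1 + comp p2 i2 = idm P];
  starK : forall (X Y : Ob) (f : Mor X Y), star (star f) = f;
  star_comp : forall (X Y Z : Ob) (f : Mor X Y) (g : Mor Y Z),
      star (comp f g) = comp (star g) (star f);
  starD : forall (X Y : Ob) (f g : Mor X Y), star (f + g) = star f + star g
}.

Arguments Mor : clear implicits.
Arguments Ob : clear implicits.
Arguments comp {i X Y Z}.
Arguments idm {i}.
Arguments star {i X Y}.

Declare Scope cat_scope.
Notation "f ⋅ g" := (comp f g) (at level 40, left associativity) : cat_scope.
Local Open Scope cat_scope.

Section Defs.
Variable C : invAddCat.

Definition is_kernel (K X Y : Ob C) (kap : Mor C K X) (phi : Mor C X Y) : Prop :=
  kap ⋅ phi = 0 /\
  forall (M : Ob C) (a : Mor C M X), a ⋅ phi = 0 ->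
    exists! a' : Mor C M K, a = a' ⋅ kap.

Definition is_cokernel (X Y L : Ob C) (phi : Mor C X Y) (lam : Mor C Y L) : Prop :=
  phi ⋅ lam = 0 /\
  forall (M : Ob C) (b : Mor C Y M), phi ⋅ b = 0 ->
    exists! b' : Mor C L M, b = lam ⋅ b'.

Definition regular (X Y : Ob C) (phi : Mor C X Y) : Prop :=
  exists chi : Mor C Y X, phi ⋅ chi ⋅ phi = phi.

Definition is_inverse (X Y : Ob C) (f : Mor C X Y) (g : Mor C Y X) : Prop :=
  f ⋅ g = idm X /\ g ⋅ f = idm Y.

Definition invertible (X Y : Ob C) (f : Mor C X Y) : Prop :=
  exists g : Mor C Y X, is_inverse f g.

Definition is_MP (X : Ob C) (phi chi : Mor C X X) : Prop :=
  [/\ phi ⋅ chi ⋅ phi = phi, chi ⋅ phi ⋅ chi = chi,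
      star (phi ⋅ chi) = phi ⋅ chi & star (chi ⋅ phi) = chi ⋅ phi].

Definition is_group_inv (X : Ob C) (phi chi : Mor C X X) : Prop :=
  [/\ phi ⋅ chi ⋅ phi = phi, chi ⋅ phi ⋅ chi = chi & phi ⋅ chi = chi ⋅ phi].

Definition is_core_inv (X : Ob C) (phi chi : Mor C X X) : Prop :=
  [/\ star (phi ⋅ chi) = phi ⋅ chi, phi ⋅ (chi ⋅ chi) = chi
    & chi ⋅ (phi ⋅ phi) = phi].

Definition is_dual_core_inv (X : Ob C) (phi chi : Mor C X X) : Prop :=
  [/\ star (chi ⋅ phi) = chi ⋅ phi, (chi ⋅ chi) ⋅ phi = chi
    & (phi ⋅ phi) ⋅ chi = phi].

Definition MP_invertible (X : Ob C) (phi : Mor C X X) := exists chi, is_MP phi chi.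
Definition group_invertible (X : Ob C) (phi : Mor C X X) := exists chi, is_group_inv phi chi.
Definition core_invertible (X : Ob C) (phi : Mor C X X) := exists chi, is_core_inv phi chi.
Definition dual_core_invertible (X : Ob C) (phi : Mor C X X) :=
  exists chi, is_dual_core_inv phi chi.

End Defs.

From Pilot Require Import Defs.
From HB Require Import structures.
From mathcomp Require Import all_boot all_algebra.
Import GRing.Theory.
Local Open Scope ring_scope.
Local Open Scope cat_scope.

(* For an inner inverse [chi] of [phi], the idempotent [1 - phi chi] is killed
   by [phi] on the right, so it factors as [a kap] with [kap a = 1]; dually
   [1 - chi phi = lam b] with [b lam = 1].  If [phi chi] is self-adjoint, so is
   [a kap], and [star a a] inverts [kap star kap]; dually [b star b] inverts
   [star lam lam].  If [phi chi = chi phi], then [a kap = lam b] and [b a]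
   inverts [kap lam].  Conversely, given inverses [u], [v], [w] of [kap lam],
   [kap star kap] and [star lam lam], the idempotents [E = 1 - lam u kap],
   [Q = 1 - star kap v kap] and [P = 1 - lam w star lam] fix [phi] on the
   appropriate side and annihilate [kap] or [lam] ([P] and [Q] self-adjoint).
   Since [phi psi] is the identity on morphisms annihilated by [kap], and
   [psi phi] on those annihilating [lam], [phi (A psi B) = B] and
   [(A psi B) phi = A] for suitable [A, B]; choosing [A, B] among [E, P, Q]
   yields all four inverses, each of which is unique. *)

Section AdditiveInvolution.
Context {C : invAddCat}.

Lemma compBl {X Y Z : Ob C} (f g : Mor C X Y) (h : Mor C Y Z) :
  (f - g) ⋅ h = f ⋅ h - g ⋅ h.
Proof. by apply: (addIr (g ⋅ h)); rewrite -compDl !subrK. Qed.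

Lemma compBr {X Y Z : Ob C} (f : Mor C X Y) (g h : Mor C Y Z) :
  f ⋅ (g - h) = f ⋅ g - f ⋅ h.
Proof. by apply: (addIr (f ⋅ h)); rewrite -compDr !subrK. Qed.

Lemma comp0l {X Y Z : Ob C} (h : Mor C Y Z) : (0 : Mor C X Y) ⋅ h = 0.
Proof. by rewrite -(subrr (0 : Mor C X Y)) compBl subrr. Qed.

Lemma comp0r {X Y Z : Ob C} (f : Mor C X Y) : f ⋅ (0 : Mor C Y Z) = 0.
Proof. by rewrite -(subrr (0 : Mor C Y Z)) compBr subrr. Qed.

Lemma starB {X Y : Ob C} (f g : Mor C X Y) : star (f - g) = star f - star g.
Proof. by apply: (addIr (star g)); rewrite -starD !subrK. Qed.

Lemma star_idm (X : Ob C) : star (idm X) = idm X.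
Proof.
transitivity (star (idm X) ⋅ star (star (idm X))); first by rewrite starK compm1.
by rewrite -star_comp compm1 starK.
Qed.

End AdditiveInvolution.

Section KernelCokernel.
Context {C : invAddCat} {X Y K L : Ob C}.
Context {phi : Mor C X Y} {chi : Mor C Y X} {kap : Mor C K X} {lam : Mor C Y L}.
Hypotheses (hk : is_kernel kap phi) (hl : is_cokernel phi lam).
Hypothesis inner : phi ⋅ chi ⋅ phi = phi.

Lemma kernel_monic (M : Ob C) (x y : Mor C M K) : x ⋅ kap = y ⋅ kap -> x = y.
Proof.
case: hk => kap_phi univ exy.
have [a [_ uniq_a]] : exists! a, x ⋅ kap = a ⋅ kap.
  by apply: univ; rewrite Defs.compA kap_phi comp0r.
by rewrite -(uniq_a x erefl) -(uniq_a y exy).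
Qed.

Lemma cokernel_epic (M : Ob C) (x y : Mor C L M) : lam ⋅ x = lam ⋅ y -> x = y.
Proof.
case: hl => phi_lam univ exy.
have [b [_ uniq_b]] : exists! b, lam ⋅ x = lam ⋅ b.
  by apply: univ; rewrite -Defs.compA phi_lam comp0l.
by rewrite -(uniq_b x erefl) -(uniq_b y exy).
Qed.

Lemma kernel_inner_split :
  exists2 a : Mor C X K, idm X - phi ⋅ chi = a ⋅ kap & kap ⋅ a = idm K.
Proof.
have [kap_phi univ] := hk.
have [a [Ea _]] : exists! a, idm X - phi ⋅ chi = a ⋅ kap.
  by apply: univ; rewrite compBl comp1m inner subrr.
exists a => //; apply: kernel_monic.
by rewrite Defs.compA -Ea comp1m compBr compm1 -Defs.compA kap_phi comp0l subr0.
Qed.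

Lemma cokernel_inner_split :
  exists2 b : Mor C L Y, idm Y - chi ⋅ phi = lam ⋅ b & b ⋅ lam = idm L.
Proof.
have [phi_lam univ] := hl.
have [b [Eb _]] : exists! b, idm Y - chi ⋅ phi = lam ⋅ b.
  by apply: univ; rewrite compBr compm1 -Defs.compA inner subrr.
exists b => //; apply: cokernel_epic.
by rewrite -Defs.compA -Eb compm1 compBl comp1m Defs.compA phi_lam comp0r subr0.
Qed.

Lemma inner_kernel0l (W : Ob C) (z : Mor C X W) : kap ⋅ z = 0 -> phi ⋅ chi ⋅ z = z.
Proof.
have [a Ea _] := kernel_inner_split => kap_z.
apply/eqP; rewrite eq_sym -subr_eq0 -{1}[z]comp1m -compBl Ea.
by rewrite Defs.compA kap_z comp0r.
Qed.

Lemma inner_cokernel0r (W : Ob C) (z : Mor C W Y) : z ⋅ lam = 0 -> z ⋅ (chi ⋅ phi) = z.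
Proof.
have [b Eb _] := cokernel_inner_split => z_lam.
apply/eqP; rewrite eq_sym -subr_eq0 -{1}[z]compm1 -compBr Eb.
by rewrite -Defs.compA z_lam comp0l.
Qed.

Lemma inner_sandwichl {W : Ob C} {a : Mor C Y Y} {b : Mor C X W} :
  phi ⋅ a = phi -> kap ⋅ b = 0 -> phi ⋅ (a ⋅ chi ⋅ b) = b.
Proof. by move=> phi_a kap_b; rewrite -!Defs.compA phi_a inner_kernel0l. Qed.

Lemma inner_sandwichr {W : Ob C} {a : Mor C W Y} {b : Mor C X X} :
  b ⋅ phi = phi -> a ⋅ lam = 0 -> a ⋅ chi ⋅ b ⋅ phi = a.
Proof. by move=> b_phi a_lam; rewrite !Defs.compA b_phi inner_cokernel0r. Qed.

Lemma kernel_gram_invertible :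
  star (phi ⋅ chi) = phi ⋅ chi -> invertible (kap ⋅ star kap).
Proof.
move=> sym_phichi; have [a Ea kap_a] := kernel_inner_split.
have sym_a_kap : star (a ⋅ kap) = a ⋅ kap by rewrite -Ea starB star_idm sym_phichi.
exists (star a ⋅ a); split.
  by rewrite Defs.compA -(Defs.compA (star kap)) -star_comp sym_a_kap Defs.compA kap_a compm1.
rewrite Defs.compA -(Defs.compA a kap) -sym_a_kap -!star_comp.
by rewrite !Defs.compA kap_a compm1 kap_a star_idm.
Qed.

Lemma cokernel_gram_invertible :
  star (chi ⋅ phi) = chi ⋅ phi -> invertible (star lam ⋅ lam).
Proof.
move=> sym_chiphi; have [b Eb b_lam] := cokernel_inner_split.
have sym_lam_b : star (lam ⋅ b) = lam ⋅ b by rewrite -Eb starB star_idm sym_chiphi.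
exists (b ⋅ star b); split.
  rewrite Defs.compA -(Defs.compA lam b) -sym_lam_b -!star_comp.
  by rewrite !Defs.compA b_lam compm1 b_lam star_idm.
by rewrite Defs.compA -(Defs.compA (star b)) -star_comp sym_lam_b Defs.compA b_lam compm1.
Qed.

End KernelCokernel.

Lemma kernel_cokernel_invertible {C : invAddCat} {X K L : Ob C}
    (phi chi : Mor C X X) (kap : Mor C K X) (lam : Mor C X L) :
  is_kernel kap phi -> is_cokernel phi lam ->
  phi ⋅ chi ⋅ phi = phi -> phi ⋅ chi = chi ⋅ phi -> invertible (kap ⋅ lam).
Proof.
move=> hk hl inner comm.
have [a Ea kap_a] := kernel_inner_split hk inner.
have [b Eb b_lam] := cokernel_inner_split hl inner.
have a_kap : a ⋅ kap = lam ⋅ b by rewrite -Ea -Eb comm.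
exists (b ⋅ a); split.
  by rewrite Defs.compA -(Defs.compA lam) -a_kap Defs.compA kap_a compm1.
by rewrite Defs.compA -(Defs.compA a) a_kap Defs.compA b_lam compm1.
Qed.

Section Inverses.
Context {C : invAddCat} {X Y : Ob C}.

Lemma is_inverse_uniq {f : Mor C X Y} {g g' : Mor C Y X} :
  is_inverse f g -> is_inverse f g' -> g = g'.
Proof. by case=> _ gf [fg' _]; rewrite -[g]compm1 -fg' -Defs.compA gf comp1m. Qed.

Lemma is_inverse_star {f : Mor C X Y} {g : Mor C Y X} :
  is_inverse f g -> is_inverse (star f) (star g).
Proof. by case=> fg gf; split; rewrite -star_comp ?fg ?gf star_idm. Qed.

End Inverses.

Lemma is_inverse_sym {C : invAddCat} {X : Ob C} (f g : Mor C X X) :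
  star f = f -> is_inverse f g -> star g = g.
Proof.
by move=> sym_f fg; apply/esym/(is_inverse_uniq fg); rewrite -sym_f; apply: is_inverse_star.
Qed.

Section ComplementProjection.
Context {C : invAddCat} {X A B : Ob C}.
Context {p : Mor C X B} {t : Mor C B A} {q : Mor C A X}.

Local Notation r := (idm X - p ⋅ t ⋅ q).

Lemma compl_proj_idl {W : Ob C} {y : Mor C X W} : q ⋅ y = 0 -> r ⋅ y = y.
Proof. by move=> q_y; rewrite compBl comp1m Defs.compA q_y comp0r subr0. Qed.

Lemma compl_proj_idr {W : Ob C} {x : Mor C W X} : x ⋅ p = 0 -> x ⋅ r = x.
Proof. by move=> x_p; rewrite compBr compm1 -!Defs.compA x_p !comp0l subr0. Qed.

Hypothesis qp_t : is_inverse (q ⋅ p) t.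

Lemma compl_proj_annl : q ⋅ r = 0.
Proof. by case: qp_t => qpt _; rewrite compBr compm1 -!Defs.compA qpt comp1m subrr. Qed.

Lemma compl_proj_annr : r ⋅ p = 0.
Proof. by case: qp_t => _ tqp; rewrite compBl comp1m !Defs.compA tqp compm1 subrr. Qed.

End ComplementProjection.

Lemma compl_proj_sym {C : invAddCat} {X A : Ob C}
    {p : Mor C X A} {t : Mor C A A} {q : Mor C A X} :
  is_inverse (q ⋅ p) t -> star q = p -> star (idm X - p ⋅ t ⋅ q) = idm X - p ⋅ t ⋅ q.
Proof.
move=> qp_t star_q; have star_p : star p = q by rewrite -star_q starK.
have star_t : star t = t by apply: is_inverse_sym qp_t; rewrite star_comp star_p star_q.
by rewrite starB star_idm !star_comp star_p star_t star_q Defs.compA.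
Qed.

Section GeneralizedInverses.
Context {C : invAddCat} {X : Ob C} {phi : Mor C X X}.
Implicit Types x y : Mor C X X.

Lemma inner_sym_left_eq {x y} :
  phi ⋅ x ⋅ phi = phi -> phi ⋅ y ⋅ phi = phi ->
  star (phi ⋅ x) = phi ⋅ x -> star (phi ⋅ y) = phi ⋅ y -> phi ⋅ x = phi ⋅ y.
Proof.
move=> x_inner y_inner x_sym y_sym.
transitivity (phi ⋅ y ⋅ (phi ⋅ x)); first by rewrite -Defs.compA y_inner.
by rewrite -{1}y_sym -{1}x_sym -star_comp -Defs.compA x_inner y_sym.
Qed.

Lemma inner_sym_right_eq {x y} :
  phi ⋅ x ⋅ phi = phi -> phi ⋅ y ⋅ phi = phi ->
  star (x ⋅ phi) = x ⋅ phi -> star (y ⋅ phi) = y ⋅ phi -> x ⋅ phi = y ⋅ phi.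
Proof.
move=> x_inner y_inner x_sym y_sym.
transitivity (x ⋅ phi ⋅ (y ⋅ phi)); first by rewrite Defs.compA -(Defs.compA phi) y_inner.
by rewrite -{1}x_sym -{1}y_sym -star_comp Defs.compA -(Defs.compA phi) x_inner y_sym.
Qed.

Lemma MP_inv_uniq {x y} : is_MP phi x -> is_MP phi y -> x = y.
Proof.
case=> x1 x2 x3 x4 [y1 y2 y3 y4].
rewrite -x2 Defs.compA (inner_sym_left_eq x1 y1 x3 y3).
by rewrite -Defs.compA (inner_sym_right_eq x1 y1 x4 y4) y2.
Qed.

Lemma group_inv_uniq {x y} : is_group_inv phi x -> is_group_inv phi y -> x = y.
Proof.
case=> x1 x2 x3 [y1 y2 y3].
have phi_phi_x : phi ⋅ (phi ⋅ x) = phi by rewrite x3 -Defs.compA x1.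
have phi_x : phi ⋅ x = phi ⋅ y by rewrite -{1}y1 y3 !Defs.compA phi_phi_x.
by rewrite -x2 Defs.compA phi_x -Defs.compA -x3 phi_x y3 y2.
Qed.

Lemma core_inv_inner {x} : is_core_inv phi x -> phi ⋅ x ⋅ phi = phi.
Proof.
case=> _ x2 x3.
by rewrite -{2}x3 Defs.compA -(Defs.compA x x) -Defs.compA x2 x3.
Qed.

Lemma core_inv_outer {x} : is_core_inv phi x -> x ⋅ phi ⋅ x = x.
Proof.
case=> _ x2 x3.
by rewrite -{2}x2 Defs.compA -(Defs.compA phi phi) -Defs.compA x3 x2.
Qed.

Lemma core_inv_uniq {x y} : is_core_inv phi x -> is_core_inv phi y -> x = y.
Proof.
move=> hx hy; have phi_x := inner_sym_left_eq (core_inv_inner hx) (core_inv_inner hy).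
rewrite -(core_inv_outer hx).
case: hx hy phi_x => x1 _ x3 [y1 y2 _] /(_ x1 y1) phi_x.
rewrite Defs.compA phi_x -{1}y2.
by rewrite -(Defs.compA phi phi) -(Defs.compA x) x3 y2.
Qed.

Lemma dual_core_inv_inner {x} : is_dual_core_inv phi x -> phi ⋅ x ⋅ phi = phi.
Proof.
case=> _; rewrite !Defs.compA => x2 x3.
by rewrite -{1}x3 !Defs.compA x2 x3.
Qed.

Lemma dual_core_inv_outer {x} : is_dual_core_inv phi x -> x ⋅ phi ⋅ x = x.
Proof.
case=> _; rewrite !Defs.compA => x2 x3.
by rewrite -{1}x2 !Defs.compA x3 x2.
Qed.

Lemma dual_core_inv_uniq {x y} :
  is_dual_core_inv phi x -> is_dual_core_inv phi y -> x = y.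
Proof.
move=> hx hy.
have x_phi := inner_sym_right_eq (dual_core_inv_inner hx) (dual_core_inv_inner hy).
rewrite -(dual_core_inv_outer hx).
case: hx hy x_phi => x1 _ x3 [y1 y2 _] /(_ x1 y1) x_phi.
rewrite x_phi -{1}y2; move: x3 y2; rewrite !Defs.compA => x3 y2.
by rewrite x3 y2.
Qed.

Lemma core_inv_group_inv {c} : is_core_inv phi c -> is_group_inv phi (c ⋅ c ⋅ phi).
Proof.
case=> _ c2 c3.
have g_phi : c ⋅ c ⋅ phi ⋅ phi = c ⋅ phi by rewrite !Defs.compA c3.
split.
- by rewrite -(Defs.compA phi (c ⋅ c)) c2 Defs.compA c3.
- by rewrite g_phi Defs.compA -(Defs.compA phi (c ⋅ c)) c2 -Defs.compA.
- by rewrite g_phi -(Defs.compA phi) c2.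
Qed.

End GeneralizedInverses.

Section InverseFormulas.
Context {C : invAddCat} {X K L : Ob C}.
Context {phi psi : Mor C X X} {kap : Mor C K X} {lam : Mor C X L}.
Context {u : Mor C L K} {v : Mor C K K} {w : Mor C L L}.
Hypotheses (hk : is_kernel kap phi) (hl : is_cokernel phi lam).
Hypothesis inner : phi ⋅ psi ⋅ phi = phi.
Hypotheses (hu : is_inverse (kap ⋅ lam) u) (hv : is_inverse (kap ⋅ star kap) v)
  (hw : is_inverse (star lam ⋅ lam) w).

Local Notation P := (idm X - lam ⋅ w ⋅ star lam).
Local Notation Q := (idm X - star kap ⋅ v ⋅ kap).
Local Notation E := (idm X - lam ⋅ u ⋅ kap).

Let kap_phi : kap ⋅ phi = 0 := proj1 hk.
Let phi_lam : phi ⋅ lam = 0 := proj1 hl.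

Let kap_E : kap ⋅ E = 0 := compl_proj_annl hu.
Let E_lam : E ⋅ lam = 0 := compl_proj_annr hu.
Let phi_E : phi ⋅ E = phi := compl_proj_idr phi_lam.
Let E_phi : E ⋅ phi = phi := compl_proj_idl kap_phi.

Let kap_Q : kap ⋅ Q = 0 := compl_proj_annl hv.
Let Q_phi : Q ⋅ phi = phi := compl_proj_idl kap_phi.
Let Q_sym : star Q = Q := compl_proj_sym hv erefl.

Let P_lam : P ⋅ lam = 0 := compl_proj_annr hw.
Let phi_P : phi ⋅ P = phi := compl_proj_idr phi_lam.
Let P_sym : star P = P := compl_proj_sym hw (starK lam).

Lemma MP_inv_formula : is_MP phi (P ⋅ psi ⋅ Q).
Proof.
have phi_chi : phi ⋅ (P ⋅ psi ⋅ Q) = Q := inner_sandwichl hk inner phi_P kap_Q.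
have chi_phi : P ⋅ psi ⋅ Q ⋅ phi = P := inner_sandwichr hl inner Q_phi P_lam.
split; rewrite ?phi_chi ?chi_phi //.
by rewrite -!Defs.compA (compl_proj_idr P_lam).
Qed.

Lemma group_inv_formula : is_group_inv phi (E ⋅ psi ⋅ E).
Proof.
have phi_chi : phi ⋅ (E ⋅ psi ⋅ E) = E := inner_sandwichl hk inner phi_E kap_E.
have chi_phi : E ⋅ psi ⋅ E ⋅ phi = E := inner_sandwichr hl inner E_phi E_lam.
split; rewrite ?phi_chi ?chi_phi //.
by rewrite -!Defs.compA (compl_proj_idr E_lam).
Qed.

Lemma core_inv_formula : is_core_inv phi (E ⋅ psi ⋅ Q).
Proof.
have phi_chi : phi ⋅ (E ⋅ psi ⋅ Q) = Q := inner_sandwichl hk inner phi_E kap_Q.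
have chi_phi : E ⋅ psi ⋅ Q ⋅ phi = E := inner_sandwichr hl inner Q_phi E_lam.
split.
- by rewrite phi_chi.
- by rewrite -Defs.compA phi_chi -!Defs.compA (compl_proj_idl kap_E).
- by rewrite -Defs.compA chi_phi.
Qed.

Lemma dual_core_inv_formula : is_dual_core_inv phi (P ⋅ psi ⋅ E).
Proof.
have phi_chi : phi ⋅ (P ⋅ psi ⋅ E) = E := inner_sandwichl hk inner phi_P kap_E.
have chi_phi : P ⋅ psi ⋅ E ⋅ phi = P := inner_sandwichr hl inner E_phi P_lam.
split.
- by rewrite chi_phi.
- by rewrite Defs.compA chi_phi Defs.compA (compl_proj_idr E_lam).
- by rewrite Defs.compA phi_chi.
Qed.

End InverseFormulas.

Theorem corollary3p5 (C : invAddCat) (X K L : Ob C)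
  (phi : Mor C X X) (kap : Mor C K X) (lam : Mor C X L)
  (hk : is_kernel kap phi) (hl : is_cokernel phi lam) :
  let cond1 := core_invertible phi /\ dual_core_invertible phi in
  let cond2 := MP_invertible phi /\ group_invertible phi in
  let cond3 := [/\ regular phi, invertible (kap ⋅ lam),
                   invertible (kap ⋅ star kap) & invertible (star lam ⋅ lam)] in
  [/\ cond1 <-> cond2, cond2 <-> cond3 &
   (cond3 ->
    forall (psi : Mor C X X), phi ⋅ psi ⋅ phi = phi ->
    forall (u : Mor C L K) (v : Mor C K K) (w : Mor C L L),
      is_inverse (kap ⋅ lam) u ->
      is_inverse (kap ⋅ star kap) v ->
      is_inverse (star lam ⋅ lam) w ->
      let P1 := idm X - lam ⋅ w ⋅ star lam in
      let Q1 := idm X - star kap ⋅ v ⋅ kap in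
      let E := idm X - lam ⋅ u ⋅ kap in
      [/\ is_MP phi (P1 ⋅ psi ⋅ Q1) /\
            (forall chi, is_MP phi chi -> chi = P1 ⋅ psi ⋅ Q1),
          is_group_inv phi (E ⋅ psi ⋅ E) /\
            (forall chi, is_group_inv phi chi -> chi = E ⋅ psi ⋅ E),
          is_core_inv phi (E ⋅ psi ⋅ Q1) /\
            (forall chi, is_core_inv phi chi -> chi = E ⋅ psi ⋅ Q1) &
          is_dual_core_inv phi (P1 ⋅ psi ⋅ E) /\
            (forall chi, is_dual_core_inv phi chi -> chi = P1 ⋅ psi ⋅ E)])].
Proof.
move=> cond1 cond2 cond3.
have from3 : cond3 -> cond1 /\ cond2.
  case=> -[psi inner] [u hu] [v hv] [w hw]; split; split; eexists.
  - exact: core_inv_formula hk hl inner hu hv.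
  - exact: dual_core_inv_formula hk hl inner hu hw.
  - exact: MP_inv_formula hk hl inner hv hw.
  - exact: group_inv_formula hk hl inner hu.
have from2 : cond2 -> cond3.
  case=> -[m [m_inner _ m_sym m_sym']] [g [g_inner _ g_comm]]; split.
  - by exists m.
  - exact: kernel_cokernel_invertible hk hl g_inner g_comm.
  - exact: kernel_gram_invertible hk m_inner m_sym.
  - exact: cokernel_gram_invertible hl m_inner m_sym'.
have from1 : cond1 -> cond3.
  case=> -[c hc] [d hd]; have [g_inner _ g_comm] := core_inv_group_inv hc.
  have [[c_sym _ _] [d_sym _ _]] := (hc, hd).
  split.
  - by exists c; apply: core_inv_inner hc.
  - exact: kernel_cokernel_invertible hk hl g_inner g_comm.
  - exact: kernel_gram_invertible hk (core_inv_inner hc) c_sym.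
  - exact: cokernel_gram_invertible hl (dual_core_inv_inner hd) d_sym.
split; [tauto | tauto | move=> _ psi inner u v w hu hv hw P1 Q1 E].
have mp := MP_inv_formula hk hl inner hv hw.
have gr := group_inv_formula hk hl inner hu.
have co := core_inv_formula hk hl inner hu hv.
have dco := dual_core_inv_formula hk hl inner hu hw.
split; split=> // chi hchi.
- exact: MP_inv_uniq hchi mp.
- exact: group_inv_uniq hchi gr.
- exact: core_inv_uniq hchi co.
- exact: dual_core_inv_uniq hchi dco.
Qed.
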